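(* Let $c\in\mathbb{R}$ and let $\kappa:(c,\infty)\to\mathbb{R}$ be a function which is bounded from above with $\kappa(x)\to0$ as $x\to\infty$. Then $\kappa$ has a majorant $\gamma:(c,\infty)\to\mathbb{R}$ (i.e. $\gamma\ge\kappa$) of class $C^\infty$ such that $\gamma(x)\to0$ as $x\to\infty$ and $$(-1)^k\gamma^{(k)}(x)\ge0,\qquad x>c,\ k=0,1,2,\dots.$$ *)

From Stdlib Require Export Reals.
From Coquelicot Require Export Coquelicot.
Open Scope R_scope.

Definition smooth_on_right (c : R) (g : R -> R) : Prop :=
  forall (k : nat) (x : R), c < x -> ex_derive_n g k x.

From Stdlib Require Import Reals Lra IndefiniteDescription.
From Coquelicot Require Import Coquelicot.
Open Scope R_scope.

(** With [K] an upper bound of [kappa], pick thresholds [X_0 = c] and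
    [X_j >= c] such that [kappa <= K 2^-j] beyond [X_j], and take
    [gamma x = sum_j 2 K 2^-j exp (- b_j (x - c))] with
    [b_j = 1 / (2 (X_(j+1) - c) + 1)].  Every term is completely monotone, and
    [0 < b_j <= 1] makes the termwise differentiated series converge locally
    uniformly, so [gamma] is smooth with the right signs; dominated convergence
    gives [gamma -> 0].  On [(X_j, X_(j+1)]] we have [b_j (x - c) <= 1/2], so the
    [j]-th term alone is at least [K 2^-j >= kappa x]. *)

Lemma exp_le_exp x y : x <= y -> exp x <= exp y.
Proof. intros [Hlt|Heq]; [now apply Rlt_le, exp_increasing|subst; apply Rle_refl]. Qed.

Lemma Series_nonneg (a : nat -> R) :
  (forall n, 0 <= a n) -> ex_series a -> 0 <= Series a.
Proof.
  intros Ha Hex.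
  replace 0 with (Series (fun n => 0 * a n)) by (rewrite Series_scal_l; ring).
  apply Series_le; [intro n; specialize (Ha n); lra|exact Hex].
Qed.

Lemma Series_split_at (a : nat -> R) (N : nat) : ex_series a ->
  Series a = sum_n a N + Series (fun k => a (S N + k)%nat).
Proof.
  intros Ha. rewrite sum_n_Reals. exact (Series_incr_n a (S N) (Nat.lt_0_succ N) Ha).
Qed.

Lemma Series_ge_term (a : nat -> R) (j : nat) :
  (forall n, 0 <= a n) -> ex_series a -> a j <= Series a.
Proof.
  intros Ha Hex. rewrite (Series_split_at a j Hex).
  assert (0 <= Series (fun k => a (S j + k)%nat)).
  { apply Series_nonneg; [intro k; apply Ha|]. now apply (ex_series_incr_n a (S j)). }
  assert (a j <= sum_n a j).
  { destruct j as [|j]; [rewrite sum_O; lra|].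
    rewrite sum_Sn, sum_n_Reals. pose proof (cond_pos_sum a j Ha).
    change (a (S j) <= sum_f_R0 a j + a (S j)). lra. }
  lra.
Qed.

Lemma Series_tail_small (a : nat -> R) : ex_series a ->
  forall eps, 0 < eps -> exists N, Rabs (Series (fun k => a (S N + k)%nat)) < eps.
Proof.
  intros Ha eps Heps.
  assert (Hlim : is_lim_seq (sum_n a) (Series a)) by now apply Series_correct.
  apply is_lim_seq_spec in Hlim.
  destruct (Hlim (mkposreal eps Heps)) as [N HN].
  exists N. rewrite (Series_split_at a N Ha) in HN.
  specialize (HN N (le_n N)).
  unfold Rminus in HN.
  rewrite Ropp_plus_distr, <- Rplus_assoc, Rplus_opp_r, Rplus_0_l, Rabs_Ropp in HN.
  exact HN.
Qed.

Lemma is_lim_sum_n (f : nat -> R -> R) (l : nat -> R) (x : Rbar) (N : nat) :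
  (forall j, is_lim (f j) x (l j)) ->
  is_lim (fun y => sum_n (fun j => f j y) N) x (sum_n l N).
Proof.
  intros Hf. induction N as [|N IH].
  - apply (is_lim_ext (f 0%nat)); [intro y; now rewrite sum_O|]. rewrite sum_O. apply Hf.
  - apply (is_lim_ext (fun y => sum_n (fun j => f j y) N + f (S N) y)).
    + intro y. now rewrite sum_Sn.
    + rewrite sum_Sn. now apply is_lim_plus'.
Qed.

Lemma is_lim_Series_dominated (f : nat -> R -> R) (a : nat -> R) (x0 : R) :
  ex_series a ->
  (forall j x, x0 < x -> 0 <= f j x <= a j) ->
  (forall j, is_lim (f j) p_infty 0) ->
  is_lim (fun x => Series (fun j => f j x)) p_infty 0.
Proof.
  intros Ha Hdom Hf. apply is_lim_spec. intros eps.
  assert (Heps2 : 0 < eps / 2) by (destruct eps; simpl; lra).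
  destruct (Series_tail_small a Ha (eps / 2) Heps2) as [N HN].
  assert (Hpart := is_lim_sum_n f (fun _ => 0) p_infty N Hf).
  rewrite sum_n_const, Rmult_0_r in Hpart.
  apply is_lim_spec in Hpart. destruct (Hpart (mkposreal _ Heps2)) as [M HM].
  exists (Rmax M x0). intros x Hx.
  assert (HxM : M < x) by (eapply Rle_lt_trans; [apply Rmax_l|exact Hx]).
  assert (Hx0 : x0 < x) by (eapply Rle_lt_trans; [apply Rmax_r|exact Hx]).
  assert (Hfx : ex_series (fun j => f j x)).
  { apply (@ex_series_le R_AbsRing R_CompleteNormedModule) with a; [|exact Ha].
    intro j. destruct (Hdom j x Hx0). rewrite Rabs_pos_eq; [assumption|lra]. }
  assert (Htail : Series (fun k => f (S N + k)%nat x) <= Series (fun k => a (S N + k)%nat)).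
  { apply Series_le; [intro k; now apply Hdom|]. now apply (ex_series_incr_n a (S N)). }
  specialize (HM x HxM). simpl in HM |- *.
  rewrite (Series_split_at _ N Hfx). rewrite Rminus_0_r in HM |- *.
  pose proof (Rle_abs (Series (fun k => a (S N + k)%nat))).
  assert (0 <= Series (fun k => f (S N + k)%nat x)).
  { apply Series_nonneg; [intro k; exact (proj1 (Hdom _ x Hx0))|].
    now apply (ex_series_incr_n (fun j => f j x) (S N)). }
  assert (0 <= sum_n (fun j => f j x) N).
  { rewrite sum_n_Reals. apply cond_pos_sum. intro j. exact (proj1 (Hdom j x Hx0)). }
  rewrite Rabs_pos_eq in HM by assumption.
  rewrite Rabs_pos_eq by lra. lra.
Qed.

Section ExponentialSeries.

Variables (a b : nat -> R) (c : R).
Hypothesis a_nonneg : forall j, 0 <= a j.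
Hypothesis a_summable : ex_series a.
Hypothesis b_range : forall j, 0 < b j <= 1.

Definition exp_term (k j : nat) (x : R) : R :=
  a j * (- b j) ^ k * exp (- b j * (x - c)).

Definition exp_series (k : nat) (x : R) : R := Series (fun j => exp_term k j x).

Lemma exp_term_abs_le k j x : Rabs (exp_term k j x) <= a j * exp (Rabs x + Rabs c).
Proof.
  unfold exp_term. destruct (b_range j) as [Hb0 Hb1].
  rewrite !Rabs_mult, (Rabs_pos_eq (a j)), (Rabs_pos_eq (exp _)) by
    (apply a_nonneg || apply Rlt_le, exp_pos).
  rewrite <- RPow_abs, Rabs_Ropp, Rabs_pos_eq by lra.
  assert (Hpow : b j ^ k <= 1) by (rewrite <- (pow1 k); apply pow_incr; lra).
  assert (Hexp : exp (- b j * (x - c)) <= exp (Rabs x + Rabs c)).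
  { apply exp_le_exp.
    pose proof (Rabs_triang x (- c)) as Htri. rewrite Rabs_Ropp in Htri.
    pose proof (Rle_abs (- (x - c))) as Habs. rewrite Rabs_Ropp in Habs.
    pose proof (Rabs_pos (x - c)). unfold Rminus in *. nra. }
  pose proof (a_nonneg j). pose proof (pow_le (b j) k ltac:(lra)).
  pose proof (exp_pos (- b j * (x - c))).
  rewrite Rmult_assoc. apply Rmult_le_compat_l; [assumption|].
  rewrite <- (Rmult_1_l (exp (_ + _))). apply Rmult_le_compat; lra.
Qed.

Lemma ex_series_exp_term k x : ex_series (fun j => exp_term k j x).
Proof.
  apply (@ex_series_le R_AbsRing R_CompleteNormedModule)
    with (fun j => a j * exp (Rabs x + Rabs c)); [intro j; apply exp_term_abs_le|].
  now apply ex_series_scal_r.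
Qed.

Lemma is_derive_exp_term k j x : is_derive (exp_term k j) x (exp_term (S k) j x).
Proof.
  unfold exp_term. auto_derive; [exact I|]. simpl. unfold Rminus. ring.
Qed.

Lemma exp_term_CVN k (r : posreal) : CVN_r (exp_term k) r.
Proof.
  exists (fun j => a j * exp (r + Rabs c)), (Series (fun j => a j * exp (r + Rabs c))).
  split.
  - apply is_series_Reals.
    apply (is_series_ext (fun j => a j * exp (r + Rabs c))).
    + intro j. symmetry. apply Rabs_pos_eq.
      apply Rmult_le_pos; [apply a_nonneg|apply Rlt_le, exp_pos].
    + now apply Series_correct, ex_series_scal_r.
  - intros j y Hy. unfold Boule in Hy. rewrite Rminus_0_r in Hy.
    eapply Rle_trans; [apply exp_term_abs_le|].
    apply Rmult_le_compat_l; [apply a_nonneg|]. apply exp_le_exp. lra.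
Qed.

Lemma is_derive_exp_series k x : is_derive (exp_series k) x (exp_series (S k) x).
Proof.
  assert (Hr : 0 < Rabs x + 1) by (pose proof (Rabs_pos x); lra).
  destruct (CVN_CVU_r _ (mkposreal _ Hr) (exp_term_CVN (S k) (mkposreal _ Hr)) x)
    as [d Hd]; [simpl; lra|].
  apply is_derive_Reals.
  apply (CVU_derivable (SP (exp_term k)) (SP (exp_term (S k))) _ _ x d Hd).
  - intros y _. apply is_series_Reals, Series_correct, ex_series_exp_term.
  - intros n y _. apply is_derive_Reals. unfold SP.
    apply (is_derive_ext (fun t => sum_n (fun j => exp_term k j t) n));
      [intro t; apply sum_n_Reals|].
    rewrite <- sum_n_Reals. apply (is_derive_sum_n (fun j t => exp_term k j t)).
    intros j _. apply is_derive_exp_term.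
  - unfold Boule. rewrite Rminus_eq_0, Rabs_R0. apply cond_pos.
Qed.

Lemma Derive_n_exp_series k x : Derive_n (exp_series 0) k x = exp_series k x.
Proof.
  revert x. induction k as [|k IH]; intro x; [reflexivity|].
  simpl. rewrite (Derive_ext _ _ _ IH).
  apply is_derive_unique, is_derive_exp_series.
Qed.

Lemma ex_derive_n_exp_series k x : ex_derive_n (exp_series 0) k x.
Proof.
  destruct k as [|k]; [exact I|]. simpl.
  apply (ex_derive_ext (exp_series k)); [intro t; symmetry; apply Derive_n_exp_series|].
  eexists. apply is_derive_exp_series.
Qed.

Lemma exp_term_sign k j x : 0 <= (-1) ^ k * exp_term k j x.
Proof.
  unfold exp_term. destruct (b_range j).
  replace ((-1) ^ k * (a j * (- b j) ^ k * exp (- b j * (x - c))))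
    with (a j * (-1 * - b j) ^ k * exp (- b j * (x - c)))
    by (rewrite Rpow_mult_distr; ring).
  replace (-1 * - b j) with (b j) by ring.
  apply Rmult_le_pos; [apply Rmult_le_pos; [apply a_nonneg|apply pow_le; lra]|].
  apply Rlt_le, exp_pos.
Qed.

Lemma exp_series_sign k x : 0 <= (-1) ^ k * exp_series k x.
Proof.
  unfold exp_series. rewrite <- Series_scal_l.
  apply Series_nonneg; [intro j; apply exp_term_sign|].
  exact (@ex_series_scal_l R_AbsRing R_NormedModule _ _ (ex_series_exp_term k x)).
Qed.

Lemma exp_term_nonneg j x : 0 <= exp_term 0 j x.
Proof. rewrite <- (Rmult_1_l (exp_term 0 j x)). apply (exp_term_sign 0). Qed.

Lemma is_lim_exp_term j : is_lim (exp_term 0 j) p_infty 0.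
Proof.
  destruct (b_range j).
  assert (Hexp : is_lim (fun x => exp (- b j * x + b j * c)) p_infty 0).
  { apply (is_lim_comp_lin exp); [|lra].
    simpl. destruct (Rle_dec 0 (- b j)); [exfalso; lra|]. apply is_lim_exp_m. }
  pose proof (is_lim_scal_l _ (a j) p_infty 0 Hexp) as Hlim.
  simpl in Hlim. rewrite Rmult_0_r in Hlim.
  refine (is_lim_ext _ _ _ _ _ Hlim).
  intro x. unfold exp_term. rewrite pow_O, Rmult_1_r. do 2 f_equal. ring.
Qed.

Lemma is_lim_exp_series : is_lim (exp_series 0) p_infty 0.
Proof.
  apply (is_lim_Series_dominated (exp_term 0) a c a_summable); [|apply is_lim_exp_term].
  intros j x Hx. split; [apply exp_term_nonneg|].
  unfold exp_term. rewrite pow_O, Rmult_1_r.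
  rewrite <- (Rmult_1_r (a j)) at 2.
  apply Rmult_le_compat_l; [apply a_nonneg|].
  rewrite <- exp_0. apply exp_le_exp. destruct (b_range j). nra.
Qed.

Lemma exp_series_ge_term j x : exp_term 0 j x <= exp_series 0 x.
Proof.
  apply (Series_ge_term (fun i => exp_term 0 i x));
    [intro i; apply exp_term_nonneg|apply ex_series_exp_term].
Qed.

End ExponentialSeries.

Lemma half_le_exp_neg t : t <= / 2 -> / 2 <= exp (- t).
Proof.
  intros Ht.
  assert (Hsq : exp (/ 2) * exp (/ 2) = exp 1) by (rewrite <- exp_plus; f_equal; field).
  pose proof exp_le_3. pose proof (exp_pos (/ 2)).
  assert (exp (/ 2) <= 2) by nra.
  apply Rle_trans with (exp (- / 2)); [|apply exp_le_exp; lra].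
  rewrite exp_Ropp. apply Rinv_le_contravar; lra.
Qed.

Lemma exists_crossing (X : nat -> R) (x : R) (n : nat) :
  X 0%nat < x -> x <= X n -> exists j, X j < x <= X (S j).
Proof.
  intros H0. induction n as [|n IH]; intros Hn; [lra|].
  destruct (Rle_lt_dec x (X n)) as [Hle|Hlt]; [now apply IH|].
  now exists n.
Qed.

Lemma threshold_sequence (c : R) (kappa : R -> R) (e : nat -> R) :
  (forall j, 0 < e j) -> (forall x, c < x -> kappa x <= e 0%nat) ->
  is_lim kappa p_infty 0 ->
  exists X : nat -> R, X 0%nat = c /\ (forall j, c <= X j) /\
    (forall j x, X j < x -> kappa x <= e j).
Proof.
  intros He Hbdd Hlim. apply is_lim_spec in Hlim.
  assert (Hthr : forall j, exists Y, c <= Y /\ forall x, Y < x -> kappa x <= e (S j)).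
  { intro j. destruct (Hlim (mkposreal _ (He (S j)))) as [N HN].
    exists (Rmax N c). split; [apply Rmax_r|]. intros x Hx.
    assert (HxN : N < x) by (eapply Rle_lt_trans; [apply Rmax_l|exact Hx]).
    specialize (HN x HxN). simpl in HN. rewrite Rminus_0_r in HN.
    pose proof (Rle_abs (kappa x)). lra. }
  destruct (functional_choice _ Hthr) as [Y HY].
  exists (fun j => match j with O => c | S j' => Y j' end).
  split; [reflexivity|split].
  - intros [|j]; [apply Rle_refl|apply HY].
  - intros [|j] x Hx; [now apply Hbdd|now apply HY].
Qed.

Definition crossing_rate (c : R) (X : nat -> R) (j : nat) : R :=
  / (2 * (X (S j) - c) + 1).

Lemma crossing_rate_range c X :
  (forall j, c <= X j) -> forall j, 0 < crossing_rate c X j <= 1.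
Proof.
  intros HX j. unfold crossing_rate. specialize (HX (S j)). split.
  - apply Rinv_0_lt_compat. lra.
  - rewrite <- Rinv_1. apply Rinv_le_contravar; lra.
Qed.

Lemma crossing_rate_mul_le c X j x :
  c <= X (S j) -> x <= X (S j) -> crossing_rate c X j * (x - c) <= / 2.
Proof.
  intros HX Hx. unfold crossing_rate.
  apply Rmult_le_reg_l with (2 * (X (S j) - c) + 1); [lra|].
  rewrite <- Rmult_assoc, Rinv_r by lra. lra.
Qed.

Lemma exp_series_majorant (c : R) (kappa : R -> R) (e X : nat -> R) :
  (forall j, 0 < e j) -> ex_series e ->
  X 0%nat = c -> (forall j, c <= X j) -> (forall j x, X j < x -> kappa x <= e j) ->
  forall x, c < x -> kappa x <= exp_series (fun j => 2 * e j) (crossing_rate c X) c 0 x.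
Proof.
  intros He Hsum HX0 HXc Hkappa x Hx.
  set (a := fun j => 2 * e j). set (b := crossing_rate c X).
  assert (Ha : forall j, 0 <= a j) by (intro j; unfold a; specialize (He j); lra).
  assert (Hasum : ex_series a) by exact (@ex_series_scal_l R_AbsRing R_NormedModule 2 e Hsum).
  assert (Hb := crossing_rate_range c X HXc).
  destruct (Rle_lt_dec (kappa x) 0) as [Hk|Hk].
  { pose proof (exp_term_nonneg a b c Ha Hb 0 x).
    pose proof (exp_series_ge_term a b c Ha Hasum Hb 0 x). lra. }
  assert (Hsmall : exists n, e n < kappa x).
  { pose proof (ex_series_lim_0 e Hsum) as Hlim. apply is_lim_seq_spec in Hlim.
    destruct (Hlim (mkposreal _ Hk)) as [n Hn]. exists n.
    specialize (Hn n (le_n n)). simpl in Hn. rewrite Rminus_0_r in Hn.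
    pose proof (Rle_abs (e n)). lra. }
  destruct Hsmall as [n Hn].
  assert (HxXn : x <= X n).
  { destruct (Rle_lt_dec x (X n)) as [Hle|Hlt]; [exact Hle|].
    specialize (Hkappa n x Hlt). lra. }
  destruct (exists_crossing X x n ltac:(lra) HxXn) as [j [Hj1 Hj2]].
  apply Rle_trans with (exp_term a b c 0 j x);
    [|exact (exp_series_ge_term a b c Ha Hasum Hb j x)].
  unfold exp_term, a. rewrite pow_O, Rmult_1_r.
  assert (Hexp : / 2 <= exp (- b j * (x - c))).
  { rewrite Ropp_mult_distr_l_reverse. apply half_le_exp_neg.
    apply crossing_rate_mul_le; [apply HXc|exact Hj2]. }
  specialize (Hkappa j x Hj1). specialize (He j). nra.
Qed.

Theorem claim8p3 (c : R) (kappa : R -> R)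
  (hbdd : exists M : R, forall x : R, c < x -> kappa x <= M)
  (hlim : is_lim kappa p_infty 0) :
  exists gamma : R -> R,
    smooth_on_right c gamma /\
    (forall x : R, c < x -> kappa x <= gamma x) /\
    is_lim gamma p_infty 0 /\
    (forall (k : nat) (x : R), c < x -> 0 <= (-1) ^ k * Derive_n gamma k x).
Proof.
  destruct hbdd as [M HM].
  set (e := fun j => Rmax M 1 * (/ 2) ^ j).
  assert (He : forall j, 0 < e j).
  { intro j. apply Rmult_lt_0_compat; [pose proof (Rmax_r M 1); lra|apply pow_lt; lra]. }
  assert (Hsum : ex_series e).
  { apply (@ex_series_scal_l R_AbsRing R_NormedModule), ex_series_geom.
    rewrite Rabs_pos_eq; lra. }
  assert (He0 : forall x, c < x -> kappa x <= e 0%nat).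
  { intros x Hx. unfold e. rewrite pow_O, Rmult_1_r. pose proof (Rmax_l M 1).
    specialize (HM x Hx). lra. }
  destruct (threshold_sequence c kappa e He He0 hlim) as [X [HX0 [HXc HX]]].
  set (a := fun j => 2 * e j).
  assert (Ha : forall j, 0 <= a j) by (intro j; unfold a; specialize (He j); lra).
  assert (Hasum : ex_series a) by exact (@ex_series_scal_l R_AbsRing R_NormedModule 2 e Hsum).
  assert (Hb := crossing_rate_range c X HXc).
  exists (exp_series a (crossing_rate c X) c 0). split; [|split; [|split]].
  - intros k x _. now apply ex_derive_n_exp_series.
  - exact (exp_series_majorant c kappa e X He Hsum HX0 HXc HX).
  - now apply is_lim_exp_series.
  - intros k x _. rewrite Derive_n_exp_series by assumption. now apply exp_series_sign.
Qed.
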